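(* Let $k$ be an algebraically closed field of characteristic zero, let $\mathfrak g$ be a finite-dimensional nilpotent Lie algebra over $k$, and let $(A,\cdot)$ be an LR-structure on $\mathfrak g$. Let $\mathfrak a\subseteq\mathfrak{gl}(A)$ be the (abelian) Lie subalgebra spanned by all $L(x)$, $x\in A$, and let $A=A_1\oplus\cdots\oplus A_s$ be the decomposition of $A$ into the (nonzero) generalized weight spaces $A_i=A_{\alpha_i}(\mathfrak a)$ of the inclusion representation of $\mathfrak a$, with pairwise distinct weights $\alpha_i\in\mathrm{Hom}(\mathfrak a,k)$. For each $i$ let $e_{i,1},\dots,e_{i,n_i}$ be a basis of $A_i$ in which every $L(z)|_{A_i}$, $z\in A$, is upper triangular (with all diagonal entries equal to $\alpha_i(L(z))$), and put $A_{i,n_i-1}=\mathrm{span}(e_{i,1},\dots,e_{i,n_i-1})$. Write $x\in A$ as $x=x_1+\dots+x_s$ with $x_j\in A_j$. If $x_i\in A_{i,n_i-1}$ for some $i$, then $\alpha_i(L(x))=0$.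
   Context: An LR-algebra is a vector space $A$ with a bilinear product $\cdot$ satisfying $x\cdot(y\cdot z)=y\cdot(x\cdot z)$ and $(x\cdot y)\cdot z=(x\cdot z)\cdot y$ for all $x,y,z\in A$. An LR-structure on a Lie algebra $\mathfrak g$ is an LR-algebra product on the underlying vector space of $\mathfrak g$ such that $x\cdot y-y\cdot x=[x,y]$. $L(x)y=x\cdot y$, $R(x)y=y\cdot x$; the operators $L(x)$ pairwise commute in an LR-algebra. *)

From HB Require Import structures.
From mathcomp Require Import all_boot all_order all_algebra all_field.
Set Implicit Arguments. Unset Strict Implicit. Unset Printing Implicit Defensive.
Import GRing.Theory.
Local Open Scope ring_scope.

Definition bilinear_prod (k : fieldType) (vT : vectType k)
  (mul : vT -> vT -> vT) : Prop :=
  (forall (a : k) x y z, mul (a *: x + y) z = a *: mul x z + mul y z) /\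
  (forall (a : k) x y z, mul x (a *: y + z) = a *: mul x y + mul x z).

Definition LR_algebra (k : fieldType) (vT : vectType k)
  (mul : vT -> vT -> vT) : Prop :=
  bilinear_prod mul /\
  (forall x y z, mul x (mul y z) = mul y (mul x z)) /\
  (forall x y z, mul (mul x y) z = mul (mul x z) y).

Definition commutator_br (k : fieldType) (vT : vectType k)
  (mul : vT -> vT -> vT) (x y : vT) : vT := mul x y - mul y x.

(* Nilpotency of a Lie algebra: some term of the lower central series vanishes,
   i.e. all brackets [x1,[x2,...,[xm,y]...]] of a fixed length vanish
   (these brackets span the lower central series term g^{m+1}). *)
Definition lie_nilpotent (k : fieldType) (vT : vectType k)
  (br : vT -> vT -> vT) : Prop :=
  exists m : nat, forall (xs : seq vT) (y : vT),
    size xs = m -> foldr (fun x acc => br x acc) y xs = 0.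

(* Generalized weight space membership for the abelian algebra spanned by the
   L(x) = mul x, with weight given by lam : x |-> alpha(L(x)). *)
Definition in_gen_weight_space (k : fieldType) (vT : vectType k)
  (mul : vT -> vT -> vT) (lam : vT -> k) (v : vT) : Prop :=
  forall x : vT, exists n : nat, iter n (fun w => mul x w - lam x *: w) v = 0.

From HB Require Import structures.
From mathcomp Require Import all_boot all_order all_algebra all_field.
Import GRing.Theory.
Local Open Scope ring_scope.

(* Let v be the last vector of the triangular basis of A_i, V the span of
   the other ones, and U = V (+) (sum of the A_j, j <> i).  Every L(z)
   preserves U: it preserves each A_j (left multiplications commute, hence
   preserve generalized weight spaces) and V (triangularity).  The hypothesis
   on x_i says that x lies in U, so R(x) maps everything into U; and v lies
   outside U since the sum of the A_j is direct.  By triangularity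
   L(x) v = c v modulo U, so the maps L(x) - alpha_i(L(x)) (nilpotent on the
   weight space A_i) and ad x = L(x) - R(x) (nilpotent since g is) act on v
   modulo the invariant subspace U as the scalars c - alpha_i(L(x)) and c.
   A nilpotent map can only do so with the scalar 0, whence
   alpha_i(L(x)) = c = 0. *)

Section LinearAlgebra.
Context {k : fieldType} {vT : vectType k}.

Definition linmap {f : vT -> vT} (f_lin : linear f) : {linear vT -> vT} :=
  HB.pack f (GRing.isLinear.Build k vT vT *:%R f f_lin).

Lemma span_homo (f : {linear vT -> vT}) (X : seq vT) (U : {vspace vT}) :
  {in X, forall y, f y \in U} -> {homo f : u / u \in <<X>>%VS >-> u \in U}.
Proof.
move=> fX u /(memv_img (linfun f)); rewrite limg_span lfunE; apply: subvP.
by apply/span_subvP => _ /mapP[y yX ->]; rewrite lfunE; apply: fX.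
Qed.

Lemma sumv_homo {I : finType} (f : {linear vT -> vT}) (Us : I -> {vspace vT}) :
  (forall j, {homo f : u / u \in Us j}) -> {homo f : u / u \in (\sum_j Us j)%VS}.
Proof.
move=> fU u /memv_sumP[us Uus ->]; rewrite linear_sum.
by apply: memv_sumr => j _; apply/fU/Uus.
Qed.

Lemma triangular_flag_homo (f : {linear vT -> vT}) (e : seq vT) (p : nat) :
  (forall j, (j < size e)%N -> f (nth 0 e j) \in <<take j.+1 e>>%VS) ->
  {homo f : u / u \in <<take p e>>%VS}.
Proof.
move=> f_tri; apply: span_homo => _ /(nthP 0)[j + <-].
rewrite size_take_min leq_min => /andP[jp je]; rewrite nth_take //.
apply: subvP (f_tri j je); rewrite -(take_takel e jp).
by apply: sub_span => y /mem_take.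
Qed.

Lemma directv_component {I : finType} {As Bs : I -> {vspace vT}} {i : I} {v : vT} :
  directv (\sum_j As j) -> (forall j, (Bs j <= As j)%VS) ->
  v \in As i -> v \in (\sum_j Bs j)%VS -> v \in Bs i.
Proof.
move=> /directv_sum_unique dA BA vA /memv_sumP[us uB vE].
pose vs j := if j == i then v else 0.
have vsA j : true -> vs j \in As j.
  by rewrite /vs; case: eqP => [-> | _] _; rewrite ?mem0v.
have vsE : \sum_j vs j = v.
  by rewrite (bigD1 i) //= /vs eqxx big1 ?addr0 // => j /negbTE ->.
have usA j : true -> us j \in As j by move=> _; apply: subvP (BA j) _ (uB j isT).
have := dA us vs usA vsA; rewrite vsE -vE eqxx => /esym/forall_inP/(_ i isT).
by rewrite /vs eqxx => /eqP <-; apply: uB.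
Qed.

Lemma iter_mod_homo {T : {linear vT -> vT}} {U : {vspace vT}} {v c} m :
  {homo T : u / u \in U} -> T v - c *: v \in U -> iter m T v - c ^+ m *: v \in U.
Proof.
move=> TU Tv; elim: m => [|m IHm]; first by rewrite expr0 scale1r subrr mem0v.
have -> : iter m.+1 T v - c ^+ m.+1 *: v =
          T (iter m T v - c ^+ m *: v) + c ^+ m *: (T v - c *: v).
  by rewrite /= (linearB T) (linearZZ T) scalerBr scalerA -exprSr addrA subrK.
by rewrite memvD ?memvZ //; apply: TU.
Qed.

Lemma eigenvalue_mod_nilpotent (T : {linear vT -> vT}) (U : {vspace vT}) v c m :
  {homo T : u / u \in U} -> T v - c *: v \in U -> iter m T v = 0 ->
  v \notin U -> c = 0.
Proof.
move=> TU Tv Tm_v vU; have := iter_mod_homo m TU Tv.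
rewrite Tm_v sub0r memvN; apply: contraTeq => c_neq0.
by rewrite rpredZeq expf_eq0 (negbTE c_neq0) andbF.
Qed.

Lemma basis_split_last {U : {vspace vT}} {X : seq vT} :
  basis_of U X -> U != 0%VS -> exists X' v, X = rcons X' v.
Proof.
move=> /span_basis <-; case/lastP: X => [|X' v]; first by rewrite span_nil eqxx.
by exists X', v.
Qed.

Lemma memv_span_rcons (X : seq vT) v u :
  u \in <<rcons X v>>%VS -> exists c, u - c *: v \in <<X>>%VS.
Proof.
rewrite -cats1 span_cat span_seq1 => /memv_addP[a aX [_ /vlineP[c ->] ->]].
by exists c; rewrite addrK.
Qed.

Lemma free_rcons_notin (X : seq vT) v : free (rcons X v) -> v \notin <<X>>%VS.
Proof.
have /perm_free -> : perm_eq (rcons X v) (v :: X) by rewrite perm_rcons.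
by rewrite free_cons => /andP[].
Qed.

Lemma lie_nilpotent_ad (br : vT -> vT -> vT) :
  lie_nilpotent br -> exists m, forall x v, iter m (br x) v = 0.
Proof.
move=> [m nil_m]; exists m => x v; rewrite -(nil_m (nseq m x) v (size_nseq m x)).
by elim: m {nil_m} => //= m ->.
Qed.

End LinearAlgebra.

Section LRAlgebra.
Context {k : fieldType} {vT : vectType k} {mul : vT -> vT -> vT}.
Hypothesis hLR : LR_algebra mul.

Definition lmul (z : vT) : {linear vT -> vT} :=
  linmap (fun a u w => proj2 (proj1 hLR) a z u w).

Definition rmul (z : vT) : {linear vT -> vT} :=
  linmap (fun a u w => proj1 (proj1 hLR) a u w z).

(* Left multiplications commute (x.(y.z) = y.(x.z)), so every L(z) preserves
   each generalized weight space of the family of the L(y). *)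
Lemma gen_weight_space_lmul (lam : vT -> k) z v :
  in_gen_weight_space mul lam v -> in_gen_weight_space mul lam (mul z v).
Proof.
move=> v_lam y; have [p Np] := v_lam y; exists p.
pose N w := mul y w - lam y *: w.
have N_lmul w : N (lmul z w) = lmul z (N w).
  by rewrite /N (linearB (lmul z)) (linearZZ (lmul z)) /= (proj1 (proj2 hLR)).
have iterN : iter p N (lmul z v) = lmul z (iter p N v).
  by elim: p {Np} => //= p ->; rewrite N_lmul.
by change (iter p N (lmul z v) = 0); rewrite iterN Np linear0.
Qed.

(* If v is
   annihilated by a power of L(x) - lam, and the LR-algebra is nilpotent as
   a Lie algebra, then lam = 0: indeed lam = c, and c = 0 since
   ad x = L(x) - R(x) also acts on v as c modulo U. *)
Lemma weight_vanishes_mod {U : {vspace vT}} {x v : vT} {c lam : k} :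
  lie_nilpotent (commutator_br mul) ->
  (forall z, {homo mul z : u / u \in U}) -> x \in U -> v \notin U ->
  mul x v - c *: v \in U ->
  (exists p, iter p (fun w => mul x w - lam *: w) v = 0) -> lam = 0.
Proof.
move=> /lie_nilpotent_ad[m ad_nil] LU xU vU Lxv [p Lx_nil].
have c_lam : c - lam = 0.
  apply: (@eigenvalue_mod_nilpotent _ _ (lmul x \- lam \*: idfun) U v _ p)
    => //= [u uU|]; first by rewrite memvB ?memvZ //; apply: LU.
  by rewrite scalerBl opprB addrA subrK.
have c0 : c = 0.
  apply: (@eigenvalue_mod_nilpotent _ _ (lmul x \- rmul x) U v _ m) => //=.
  - by move=> u uU; rewrite memvB //; apply: LU.
  - by rewrite addrAC memvB //; apply: LU.
  - exact: ad_nil.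
by move/eqP: c_lam; rewrite c0 sub0r oppr_eq0 => /eqP.
Qed.

End LRAlgebra.

Theorem lemma2p2
  (k : closedFieldType) (hchar : [pchar k] =i pred0)
  (vT : vectType k) (mul : vT -> vT -> vT)
  (hLR : LR_algebra mul)
  (hnil : lie_nilpotent (commutator_br mul))
  (s : nat)
  (lam : 'I_s -> vT -> k)
  (hlam_lin : forall i (a : k) x y, lam i (a *: x + y) = a * lam i x + lam i y)
  (hlam_L : forall i x y, (forall z, mul x z = mul y z) -> lam i x = lam i y)
  (hlam_dist : forall i j : 'I_s, (forall x, lam i x = lam j x) -> i = j)
  (A : 'I_s -> {vspace vT})
  (hA : forall i v, v \in A i <-> in_gen_weight_space mul (lam i) v)
  (hA0 : forall i, A i != 0%VS)
  (hdir : directv (\sum_(i < s) A i))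
  (hfull : (\sum_(i < s) A i)%VS = fullv)
  (e : 'I_s -> seq vT)
  (he : forall i, basis_of (A i) (e i))
  (htri : forall i (z : vT) (j : nat), (j < size (e i))%N ->
            mul z (nth 0 (e i) j) \in <<take j.+1 (e i)>>%VS)
  (x : vT) (xs : 'I_s -> vT)
  (hxs : forall j, xs j \in A j)
  (hx : x = \sum_(j < s) xs j)
  (i : 'I_s)
  (hxi : xs i \in <<take (size (e i)).-1 (e i)>>%VS) :
  lam i x = 0.
Proof.
have [e' [v De]] := basis_split_last (he i) (hA0 i).
have span_e : <<rcons e' v>>%VS = A i by rewrite -De (span_basis (he i)).
have take_e' : take (size (e i)).-1 (e i) = e'.
  by rewrite De size_rcons -cats1 take_size_cat.
have vA : v \in A i by rewrite -span_e memv_span // mem_rcons mem_head.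
have e'_A : (<<e'>> <= A i)%VS by rewrite -span_e -cats1 span_cat addvSl.
pose Bs j := if j == i then <<e'>>%VS else A j.
have B_A j : (Bs j <= A j)%VS by rewrite /Bs; case: eqP => [-> //|_].
have LU z : {homo mul z : u / u \in (\sum_j Bs j)%VS}.
  apply: (sumv_homo (lmul hLR z)) => j; rewrite /Bs; case: eqP => _.
    by rewrite -take_e'; apply: (triangular_flag_homo (lmul hLR z)); apply: htri.
  by move=> u /hA /(gen_weight_space_lmul hLR _ z) /hA.
have xU : x \in (\sum_j Bs j)%VS.
  by rewrite hx; apply: memv_sumr => j _; rewrite /Bs -take_e'; case: eqP => [-> |].
have vU : v \notin (\sum_j Bs j)%VS.
  have v_e' : v \notin <<e'>>%VS by rewrite free_rcons_notin // -De (basis_free (he i)).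
  by apply: contra v_e' => /(directv_component hdir B_A vA); rewrite /Bs eqxx.
have [c Lxv] : exists c, mul x v - c *: v \in <<e'>>%VS.
  apply: memv_span_rcons; have := htri i x (size e').
  by rewrite De size_rcons nth_rcons ltnn eqxx take_oversize ?size_rcons //; apply.
have LxvU : mul x v - c *: v \in (\sum_j Bs j)%VS.
  by apply: subvP Lxv; apply: (sumv_sup i) => //; rewrite /Bs eqxx.
exact: (weight_vanishes_mod hLR hnil LU xU vU LxvU (proj1 (hA i v) vA x)).
Qed.
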